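(* For every integer $n\ge 0$, $|\mathfrak D^1_{2n}(1342,1423)|=s_{n+1}$, where $s_m$ is the $m$th little Schröder number.
   Context: A Dumont permutation of the first kind of length $2n$ is a permutation $\pi\in\mathfrak S_{2n}$ such that for every $i=1,\dots,2n$: if $\pi(i)$ is even then $i<2n$ and $\pi(i)>\pi(i+1)$; if $\pi(i)$ is odd then $i=2n$ or $\pi(i)<\pi(i+1)$. $\mathfrak D^1_{2n}$ denotes the set of these ($\mathfrak D^1_0$ consists of the empty permutation). A permutation $\sigma$ contains a pattern $\tau\in\mathfrak S_k$ if some subsequence $(\sigma(i_1),\dots,\sigma(i_k))$, $i_1<\dots<i_k$, is order-isomorphic to $\tau$; otherwise $\sigma$ avoids $\tau$. $\mathfrak D^1_{2n}(T)$ denotes the set of permutations in $\mathfrak D^1_{2n}$ avoiding every pattern in $T$. The little Schröder numbers $s_1,s_2,\dots$ ($1,1,3,11,45,\dots$) are defined by the generating function $\sum_{m\ge 1}s_mx^m=\frac{1+x-\sqrt{1-6x+x^2}}{4}$. *)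

From mathcomp Require Import all_boot all_order all_algebra all_fingroup.
Set Implicit Arguments. Unset Strict Implicit. Unset Printing Implicit Defensive.
Import GRing.Theory Num.Theory.

(* One-line notation of s : 'S_m, with 1-based values: [s(1); ...; s(m)]. *)
Definition word (m : nat) (s : 'S_m) : seq nat :=
  [seq (val (s i)).+1 | i <- enum 'I_m].

Definition dumont1_word (w : seq nat) : bool :=
  [forall i : 'I_(size w),
     if ~~ odd (nth 0 w i)
     then (i.+1 < size w) && (nth 0 w i.+1 < nth 0 w i)
     else (i.+1 == size w) || (nth 0 w i < nth 0 w i.+1)].

Definition dumont1 (m : nat) (s : 'S_m) : bool := dumont1_word (word s).

Definition contains (w tau : seq nat) : bool :=
  [exists b : (size w).-tuple bool,
     let u := mask b w in
     (size u == size tau) &&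
     [forall x : 'I_(size tau), forall y : 'I_(size tau),
        (nth 0 u x < nth 0 u y) == (nth 0 tau x < nth 0 tau y)]].

Definition avoids (w tau : seq nat) : bool := ~~ contains w tau.

(* Little Schroeder numbers s_0 = 0, s_1 = 1, 1, 3, 11, 45, ...:
   the coefficients of S(x) = (1 + x - sqrt(1 - 6x + x^2))/4, i.e. the unique
   power series with S(0) = 0 and 2 S^2 - (1 + x) S + x = 0; comparing
   coefficients of x^k:  s_k = 2 sum_{i=1}^{k-1} s_i s_{k-i} - s_{k-1} + [k = 1]. *)
Definition schr_next (l : seq int) : int :=
  let k := size l in
  (2 * \sum_(1 <= i < k) l`_i * l`_(k - i) - l`_(k.-1) + (k == 1%N)%:R)%R.

Fixpoint schr_list (m : nat) : seq int :=
  match m with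
  | 0 => [:: 0%R]
  | m'.+1 => let l := schr_list m' in rcons l (schr_next l)
  end.

Definition little_schroder (m : nat) : int := (schr_list m)`_m.

From mathcomp Require Import all_boot all_order all_algebra all_fingroup.
From mathcomp Require Import zify.
Set Implicit Arguments. Unset Strict Implicit. Unset Printing Implicit Defensive.

(* In a Dumont permutation w of [1 .. 2n+2] the odd letter 2n+1 is either last
   or immediately followed by a larger letter, i.e. by 2n+2; hence
   w = a (2n+1) (2n+2) b with b nonempty, or w = a (2n+2) b (2n+1).  Avoiding
   1342 (resp. 1423) forces every letter of a above every letter of b, so b is a
   permutation of [1 .. |b|] and a one of |b| + [1 .. |a|]; |b| is even because
   the least letter of the Dumont word a is odd.  Both parts are again
   avoiding Dumont permutations, and conversely every such pair glues back.
   Thus c(n+1) = sum_(j+m=n) c(j) c(m) (1 + [m > 0]) = 2 sum_j c(j) c(n-j) - c(n),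
   which is the recursion of s(n+2) read off 2 S^2 - (1 + x) S + x = 0. *)

Lemma subseq_catP (T : eqType) (s u v : seq T) :
  subseq s (u ++ v) -> exists s1 s2, [/\ s = s1 ++ s2, subseq s1 u & subseq s2 v].
Proof.
case/subseqP=> m; rewrite size_cat => sz_m ->.
exists (mask (take (size u) m) u), (mask (drop (size u) m) v).
by rewrite -mask_cat ?cat_take_drop ?mask_subseq // size_take sz_m; case: ltnP; lia.
Qed.

Lemma subseq_rcons2 (T : eqType) (s u : seq T) x y :
  subseq (rcons s x) (rcons u y) =
  if x == y then subseq s u else subseq (rcons s x) u.
Proof.
by rewrite -subseq_rev !rev_rcons /=; case: eqP; rewrite ?subseq_rev // -rev_rcons subseq_rev.
Qed.

Lemma uniq_flatten_key (T K : eqType) (ks : seq K) (F : K -> seq T) (key : T -> K) :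
  uniq ks -> {in ks, forall k, uniq (F k)} -> {in ks, forall k, {in F k, forall x, key x = k}} ->
  uniq (flatten (map F ks)).
Proof.
elim: ks => //= k ks IHks /andP[k_ks uniq_ks] uniqF keyF.
rewrite cat_uniq uniqF ?mem_head //= IHks //; last 2 first.
- by move=> k' k'_ks; apply: uniqF; rewrite inE k'_ks orbT.
- by move=> k' k'_ks; apply: keyF; rewrite inE k'_ks orbT.
rewrite andbT; apply/hasPn => x /flattenP[_ /mapP[k' k'_ks ->] xF']; apply/negP => xF.
have := keyF k (mem_head _ _) x xF; rewrite (keyF k') ?inE ?k'_ks ?orbT // => k'E.
by move: k_ks; rewrite -k'E k'_ks.
Qed.

Lemma mem_perm_iota (s : seq nat) a n x : perm_eq s (iota a n) -> x \in s -> a <= x < a + n.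
Proof. by move=> P; rewrite (perm_mem P) mem_iota. Qed.

Lemma perm_iota_skew (u v : seq nat) a n :
  perm_eq (u ++ v) (iota a n) -> allrel ltn u v ->
  perm_eq u (iota a (size u)) /\ perm_eq v (iota (a + size u) (size v)).
Proof.
move=> P /allrelP uv.
have sortE : sort leq u ++ sort leq v = iota a (size u) ++ iota (a + size u) (size v).
  rewrite -iotaD -size_cat (perm_size P) size_iota.
  apply: (sorted_eq leq_trans anti_leq); last 2 first.
  - exact: iota_sorted.
  - by apply: perm_trans P; apply: perm_cat; rewrite perm_sort.
  rewrite sorted_pairwise ?pairwise_cat -?sorted_pairwise ?sort_sorted ?andbT //;
    try exact: leq_trans; try exact: leq_total.
  by apply/allrelP => x y; rewrite !mem_sort => xu yv; exact/ltnW/uv.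
move/eqP: sortE; rewrite eqseq_cat ?size_sort ?size_iota // => /andP[/eqP <- /eqP <-].
by rewrite !(perm_sym _ (sort _ _)) !perm_sort.
Qed.

Lemma iota_top2 k : iota 1 k.+2 = iota 1 k ++ [:: k.+1; k.+2].
Proof. by rewrite -[k.+2]addn2 iotaD add1n addn2. Qed.

Lemma perm_iota_top2_parts n (w u v : seq nat) :
  perm_eq w (iota 1 n.*2.+2) -> perm_eq w (v ++ u ++ [:: n.*2.+1; n.*2.+2]) ->
  perm_eq (v ++ u) (iota 1 n.*2).
Proof.
by move=> Pw Pwvu; rewrite -(perm_cat2r [:: n.*2.+1; n.*2.+2]) -iota_top2 -catA -(permPl Pwvu).
Qed.

Lemma perm_iota_allrel_ltn (lo hi : seq nat) a n : perm_eq (lo ++ hi) (iota a n) ->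
  (forall x y, x \in hi -> y \in lo -> x < y -> False) -> allrel ltn lo hi.
Proof.
move=> P no_asc; apply/allrelP => y x ylo xhi; case: (ltngtP y x) => // [xy | xyE].
  by case: (no_asc x y).
move: (perm_uniq P); rewrite iota_uniq cat_uniq => /and3P[_ /hasPn/(_ x xhi) /negP[]].
by rewrite -xyE.
Qed.

Lemma last_gtn (u : seq nat) c : 0 < c -> all (gtn c) u -> last 0 u < c.
Proof. by case/lastP: u => // u x _; rewrite last_rcons all_rcons => /andP[]. Qed.

Lemma subseq_skew_cat (u v : seq nat) x r :
  allrel gtn u v -> all (ltn x) r ->
  subseq (x :: r) (u ++ v) -> subseq (x :: r) u \/ subseq (x :: r) v.
Proof.
move=> /allrelP uv xr /subseq_catP[[|x1 s1] [s2 [/= E s1u s2v]]]; first by right; rewrite E.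
case: E s1u xr => <- -> xs1u; rewrite all_cat => /andP[_].
case: s2 s2v => [|y s2] ys2v; first by rewrite cats0; left.
have := uv x y (mem_subseq xs1u (mem_head _ _)) (mem_subseq ys2v (mem_head _ _)).
by rewrite /= => yx /andP[xy _]; lia.
Qed.

Lemma subseq_rcons_max (s u : seq nat) y c :
  all (gtn c) u -> has (ltn y) s ->
  subseq (rcons s y) (rcons u c) -> subseq (rcons s y) u.
Proof.
move=> cu /hasP[z zs yz]; rewrite subseq_rcons2; case: eqP => // yc /mem_subseq/(_ z zs) zu.
by have := allP cu z zu; rewrite /= -yc => /(ltn_trans yz); rewrite ltnn.
Qed.

Lemma subseq_skew_peak (u v : seq nat) c x r y :
  allrel gtn u v -> all (gtn c) (u ++ v) ->
  all (ltn x) (rcons r y) -> has (ltn y) (x :: r) ->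
  subseq (x :: rcons r y) (u ++ c :: v) ->
  subseq (x :: rcons r y) u \/ subseq (x :: rcons r y) v.
Proof.
move=> uv; rewrite all_cat => /andP[cu cv] xr yr.
rewrite -cat_rcons => /subseq_skew_cat[] //; last by right.
- by rewrite -cats1 allrel_catl uv allrel1l.
- by rewrite -rcons_cons => /subseq_rcons_max-/(_ cu yr); left.
Qed.

Definition occurs (P : nat -> nat -> nat -> nat -> bool) (w : seq nat) :=
  exists x y z t, P x y z t /\ subseq [:: x; y; z; t] w.

Definition pat1342 x y z t := [&& x < t, t < y & y < z].
Definition pat1423 x y z t := [&& x < z, z < t & t < y].

(* The properties of 1342 and 1423 that confine an occurrence in the glued
   words below to one of the two glued parts. *)
Definition peak_pattern (P : nat -> nat -> nat -> nat -> bool) :=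
  forall x y z t, P x y z t -> [&& x < z, x < t, t < y & y != z].

Lemma peak_pattern1342 : peak_pattern pat1342.
Proof. by move=> x y z t /and3P[]; lia. Qed.

Lemma peak_pattern1423 : peak_pattern pat1423.
Proof. by move=> x y z t /and3P[]; lia. Qed.

Definition shift_invariant (P : nat -> nat -> nat -> nat -> bool) :=
  forall k x y z t, P (k + x) (k + y) (k + z) (k + t) = P x y z t.

Lemma shift_invariant1342 : shift_invariant pat1342.
Proof. by move=> k x y z t; rewrite /pat1342 !ltn_add2l. Qed.

Lemma shift_invariant1423 : shift_invariant pat1423.
Proof. by move=> k x y z t; rewrite /pat1423 !ltn_add2l. Qed.

Lemma occurs_nil P : ~ occurs P [::].
Proof. by case=> [x [y [z [t []]]]]. Qed.

Lemma occurs_subseq P (u w : seq nat) : subseq u w -> occurs P u -> occurs P w.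
Proof.
move=> uw [x [y [z [t [Pxyzt sub]]]]].
by exists x, y, z, t; split; last exact: subseq_trans uw.
Qed.

Lemma occurs_shift P k (s : seq nat) : shift_invariant P ->
  occurs P (map (addn k) s) <-> occurs P s.
Proof.
move=> shiftP; split=> [[x [y [z [t [Pxyzt /subseqP[m _]]]]]] | [x [y [z [t [Pxyzt sub]]]]]].
  rewrite -map_mask; have := mask_subseq m s.
  case: (mask m s) => [|x0 [|y0 [|z0 [|t0 []]]]] //= sub [Ex Ey Ez Et].
  by exists x0, y0, z0, t0; rewrite -(shiftP k) -Ex -Ey -Ez -Et.
by exists (k + x), (k + y), (k + z), (k + t); rewrite shiftP; split; last exact: (map_subseq _ sub).
Qed.

Lemma occurs_skew_peak P (u v : seq nat) c : peak_pattern P ->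
  allrel gtn u v -> all (gtn c) (u ++ v) ->
  occurs P (u ++ c :: v) -> occurs P u \/ occurs P v.
Proof.
move=> peakP uv cuv [x [y [z [t [Pxyzt sub]]]]].
have /and4P[xz xt ty _] := peakP _ _ _ _ Pxyzt.
have [] := subseq_skew_peak (r := [:: y; z]) uv cuv _ _ sub.
- by rewrite /= xz xt andbT; lia.
- by rewrite /= ty orbT.
- by left; exists x, y, z, t.
- by right; exists x, y, z, t.
Qed.

Lemma occurs_rcons_max P (u : seq nat) c : peak_pattern P ->
  all (gtn c) u -> occurs P (rcons u c) -> occurs P u.
Proof.
move=> peakP cu; rewrite -cats1 => occ.
have [] // := occurs_skew_peak peakP (allrel0r _ _) _ occ; first by rewrite cats0.
by case=> [x [y [z [t []]]]].
Qed.

Lemma occurs_adj P (u v : seq nat) c : peak_pattern P ->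
  allrel gtn u v -> all (gtn c) (u ++ v) ->
  occurs P (u ++ [:: c, c.+1 & v]) -> occurs P u \/ occurs P v.
Proof.
rewrite all_cat => peakP uv /andP[cu cv]; rewrite -cat_rcons => occ.
have [|||] := occurs_skew_peak peakP _ _ occ.
- by rewrite -cats1 allrel_catl uv allrel1l.
- apply/allP => x; rewrite mem_cat mem_rcons inE -orbA.
  by case/or3P => [/eqP -> /= | /(allP cu) | /(allP cv)] /= => [|/ltnW|/ltnW].
- by move/(occurs_rcons_max peakP cu); left.
- by right.
Qed.

Lemma occurs_skew_peak_end P (u v : seq nat) c d : peak_pattern P ->
  allrel gtn u v -> all (gtn d) (u ++ v) -> d < c ->
  occurs P (u ++ c :: rcons v d) -> occurs P u \/ occurs P v.
Proof.
move=> peakP uv duv dc [x [y [z [t [Pxyzt]]]]].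
have /and4P[xz xt ty yz] := peakP _ _ _ _ Pxyzt.
have cuv : all (gtn c) (u ++ v) by apply/allP=> a /(allP duv) /=; lia.
have inW a : a \in u ++ c :: v -> (a == c) || (a < d).
  by rewrite mem_cat inE orbCA -mem_cat => /orP[-> // | /(allP duv) /= ->]; rewrite orbT.
rewrite -rcons_cons -rcons_cat -[[:: x; y; z; t]]/(rcons [:: x; y; z] t) subseq_rcons2.
(* An occurrence ending at d has y > d, so y = c: then z > c is impossible, and
   otherwise [:: x; y; z] is peak-shaped, hence lies in u or in v, which miss c. *)
case: eqP => [tE sub | _ sub]; last by apply: occurs_skew_peak cuv _ => //; exists x, y, z, t.
have [yW zW] : y \in u ++ c :: v /\ z \in u ++ c :: v.
  by split; apply: (mem_subseq sub); rewrite !inE eqxx ?orbT.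
case: (ltngtP y z) => [yz' | zy | yzE]; last by rewrite yzE eqxx in yz.
  by have := inW y yW; have := inW z zW; lia.
have [] := subseq_skew_peak (r := [:: y]) uv cuv _ _ sub.
- by rewrite /= xz andbT; lia.
- by rewrite /= zy orbT.
all: by move/mem_subseq/(_ y); rewrite !inE eqxx orbT => /(_ isT) yuv;
  have := allP duv y; rewrite mem_cat yuv ?orbT /= => /(_ isT); lia.
Qed.

Definition order_iso (u tau : seq nat) :=
  (size u == size tau) &&
  [forall x : 'I_(size tau), forall y : 'I_(size tau),
     (nth 0 u x < nth 0 u y) == (nth 0 tau x < nth 0 tau y)].

Lemma containsP (w tau : seq nat) :
  reflect (exists2 u, subseq u w & order_iso u tau) (contains w tau).
Proof.
apply: (iffP existsP) => [[b iso_b] | [u /subseqP[m sz_m ->] iso_u]].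
  by exists (mask b w); first exact: mask_subseq.
by exists (Tuple (introT eqP sz_m)).
Qed.

Lemma contains_occurs (w tau : seq nat) P : size tau = 4 ->
  (forall x y z t, order_iso [:: x; y; z; t] tau = P x y z t) ->
  contains w tau <-> occurs P w.
Proof.
move=> sz_tau isoP; split=> [/containsP[u sub /[dup] /andP[]] | [x [y [z [t [Pxyzt sub]]]]]].
  rewrite sz_tau; case: u sub => [|x [|y [|z [|t []]]]] // sub _.
  by rewrite isoP => Pxyzt; exists x, y, z, t.
by apply/containsP; exists [:: x; y; z; t]; rewrite ?isoP.
Qed.

Lemma order_iso1342 x y z t : order_iso [:: x; y; z; t] [:: 1; 3; 4; 2] = pat1342 x y z t.
Proof.
apply/andP/and3P => [[_ /forallP iso] | [xt ty yz]].
  have E (i j : 'I_4) := eqP (forallP (iso i) j).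
  have := E ord0 (@Ordinal 4 3 isT); have := E (@Ordinal 4 3 isT) (@Ordinal 4 1 isT).
  by have := E (@Ordinal 4 1 isT) (@Ordinal 4 2 isT); move=> /= -> -> ->.
split=> //; apply/forallP => -[[|[|[|[|i]]]] //= _]; apply/forallP => -[[|[|[|[|j]]]] //= _];
  apply/eqP; apply/idP/idP; lia.
Qed.

Lemma order_iso1423 x y z t : order_iso [:: x; y; z; t] [:: 1; 4; 2; 3] = pat1423 x y z t.
Proof.
apply/andP/and3P => [[_ /forallP iso] | [xz zt ty]].
  have E (i j : 'I_4) := eqP (forallP (iso i) j).
  have := E ord0 (@Ordinal 4 2 isT); have := E (@Ordinal 4 2 isT) (@Ordinal 4 3 isT).
  by have := E (@Ordinal 4 3 isT) (@Ordinal 4 1 isT); move=> /= -> -> ->.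
split=> //; apply/forallP => -[[|[|[|[|i]]]] //= _]; apply/forallP => -[[|[|[|[|j]]]] //= _];
  apply/eqP; apply/idP/idP; lia.
Qed.

Lemma contains1342 (w : seq nat) : contains w [:: 1; 3; 4; 2] <-> occurs pat1342 w.
Proof. exact: contains_occurs order_iso1342. Qed.

Lemma contains1423 (w : seq nat) : contains w [:: 1; 4; 2; 3] <-> occurs pat1423 w.
Proof. exact: contains_occurs order_iso1423. Qed.

Definition dumont_rel (a b : nat) := if odd a then a < b else b < a.

(* The default 1 of [last] makes the empty word Dumont. *)
Lemma dumont1_wordE (w : seq nat) :
  dumont1_word w = sorted dumont_rel w && odd (last 1 w).
Proof.
apply/forallP/andP => [D | [/(sortedP 0) D oddw] i].
  split.
    apply/(sortedP 0) => i lt_i; have := D (Ordinal (ltnW lt_i)).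
    rewrite /dumont_rel /= lt_i; case: odd => //= /orP[/eqP eq_i | //].
    by rewrite eq_i ltnn in lt_i.
  case: w D => //= x w D; have := D ord_max.
  by rewrite -[last x w](nth_last 0 (x :: w)) /= ltnn; case: odd.
case: (ltnP i.+1 (size w)) => [lt_i | ge_i].
  by have := D i lt_i; rewrite /dumont_rel; case: odd => ->; rewrite ?orbT.
have iE : i.+1 = size w by apply/eqP; rewrite eqn_leq ge_i ltn_ord.
have odd_i : odd (nth 0 w i).
  by rewrite (set_nth_default 1) // -[nat_of_ord i]/(i.+1.-1) iE nth_last.
by rewrite odd_i iE eqxx.
Qed.

Lemma dumont_rel_lt a b : a < b -> dumont_rel a b = odd a.
Proof. by rewrite /dumont_rel => ab; case: odd; rewrite // ltnNge ltnW. Qed.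

Lemma dumont1_word1 c : dumont1_word [:: c] = odd c.
Proof. by rewrite dumont1_wordE. Qed.

Lemma dumont1_word_cat (s r : seq nat) c : last 0 s < c ->
  dumont1_word (s ++ c :: r) = dumont1_word s && dumont1_word (c :: r).
Proof.
rewrite !dumont1_wordE sorted_cat_cons last_cat /=.
by case: s => [|x s] //= lt_c; rewrite rcons_path dumont_rel_lt // -!andbA.
Qed.

Lemma dumont1_word_cons2 a b (r : seq nat) :
  dumont1_word [:: a, b & r] = dumont_rel a b && dumont1_word (b :: r).
Proof. by rewrite !dumont1_wordE /= andbA. Qed.

Lemma dumont1_word_shift k (s : seq nat) : ~~ odd k ->
  dumont1_word (map (addn k) s) = dumont1_word s.
Proof.
move=> even_k; have shiftK : relpre (addn k) dumont_rel =2 dumont_rel.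
  by move=> a b; rewrite /= /dumont_rel oddD (negbTE even_k) !ltn_add2l.
rewrite !dumont1_wordE; case: s => //= x s.
by rewrite path_map (eq_path shiftK) last_map oddD (negbTE even_k).
Qed.

Lemma dumont1_word_min_odd (s : seq nat) x :
  dumont1_word s -> x \in s -> all (leq x) s -> odd x.
Proof.
move=> D x_s; case/splitPr: x_s D => s1 s2.
rewrite dumont1_wordE sorted_cat_cons last_cat all_cat /=.
case: s2 => [|y s2] /=; first by case/andP.
case/andP=> /and3P[_ + _] _ /and4P[_ _ xy _].
by rewrite /dumont_rel; case: odd => // yx; move: (leq_trans yx xy); rewrite ltnn.
Qed.

Lemma dumont1_word_adj (u v : seq nat) c : odd c -> all (gtn c) u -> all (gtn c.+1) v ->
  dumont1_word (u ++ [:: c, c.+1 & v]) = [&& dumont1_word u, dumont1_word v & v != [::]].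
Proof.
move=> odd_c cu cv; have c_gt0 : 0 < c by rewrite lt0n; apply: contraTneq odd_c => ->.
rewrite dumont1_word_cat ?last_gtn // dumont1_word_cons2 dumont_rel_lt // odd_c /=.
case: v cv => [_ | y v /andP[/= yc _]] /=; first by rewrite dumont1_word1 /= odd_c andbF.
by rewrite dumont1_word_cons2 /dumont_rel /= odd_c yc andbT.
Qed.

Lemma dumont1_word_end (u v : seq nat) c : odd c -> all (gtn c) (u ++ v) ->
  dumont1_word (u ++ c.+1 :: rcons v c) = dumont1_word u && dumont1_word v.
Proof.
rewrite all_cat => odd_c /andP[cu cv].
have c_gt0 : 0 < c by rewrite lt0n; apply: contraTneq odd_c => ->.
rewrite dumont1_word_cat ?last_gtn ?(ltnW c_gt0) //; first last.
  by apply/allP=> x /(allP cu) /= /ltnW.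
congr andb; case: v cv => [|y v] cv.
  by rewrite dumont1_word_cons2 dumont1_word1 /dumont_rel /= odd_c ltnSn dumont1_wordE.
have /andP[/= /ltnW yc _] := cv.
rewrite dumont1_word_cons2 -rcons_cons -cats1 dumont1_word_cat ?last_gtn //.
by rewrite dumont1_word1 odd_c andbT /dumont_rel /= odd_c ltnS yc.
Qed.

Lemma word_inj N : injective (@word N).
Proof.
move=> s t /eq_in_map st; apply/permP => i.
by apply/val_inj/succn_inj; apply: st; rewrite mem_enum.
Qed.

Lemma perm_word_iota N (s : 'S_N) : perm_eq (word s) (iota 1 N).
Proof.
have perm_s : perm_eq [seq s i | i <- enum 'I_N] (enum 'I_N).
  apply: uniq_perm; rewrite ?(map_inj_uniq (@perm_inj _ s)) ?enum_uniq // => i.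
  by rewrite mem_enum; apply/mapP; exists ((s^-1)%g i); rewrite ?mem_enum ?permKV.
have -> : iota 1 N = map succn (map val (enum 'I_N)) by rewrite val_enum_ord (iotaDl 1 0).
by rewrite /word (map_comp (succn \o val) s) -(map_comp succn val); apply: perm_map.
Qed.

Lemma word_surj N (w : seq nat) : perm_eq w (iota 1 N) -> exists s : 'S_N, word s = w.
Proof.
move=> Pw; have size_w : size w = N by rewrite (perm_size Pw) size_iota.
have w_i (i : 'I_N) : 0 < nth 0 w i <= N.
  have := mem_perm_iota Pw (mem_nth 0 (_ : i < size w)).
  by rewrite size_w ltn_ord add1n ltnS; apply.
have lt_pred (i : 'I_N) : (nth 0 w i).-1 < N by have := w_i i; lia.
have f_inj : injective (fun i => Ordinal (lt_pred i)).
  move=> i j [] eq_ij; have uniq_w : uniq w by rewrite (perm_uniq Pw) iota_uniq.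
  have : nth 0 w i = nth 0 w j by move: eq_ij (w_i i) (w_i j); lia.
  by move/eqP; rewrite nth_uniq ?size_w // => /eqP/val_inj.
exists (perm f_inj); rewrite -[RHS](mkseq_nth 0) size_w /mkseq -val_enum_ord -map_comp.
by apply: eq_map => i; rewrite permE /=; have := w_i i; lia.
Qed.

Definition dumont_avoiding n (w : seq nat) :=
  [/\ perm_eq w (iota 1 n.*2), dumont1_word w, ~ occurs pat1342 w & ~ occurs pat1423 w].

Lemma dumont_avoiding_size n (w : seq nat) : dumont_avoiding n w -> size w = n.*2.
Proof. by case=> /perm_size ->; rewrite size_iota. Qed.

Lemma dumont_avoiding_perm n (w : seq nat) : dumont_avoiding n w -> perm_eq w (iota 1 (size w)).
Proof. by move=> Gw; rewrite (dumont_avoiding_size Gw); case: Gw. Qed.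

Lemma dumont_avoiding_word n (s : 'S_(n.*2)) :
  [&& dumont1 s, avoids (word s) [:: 1; 3; 4; 2] & avoids (word s) [:: 1; 4; 2; 3]] <->
  dumont_avoiding n (word s).
Proof.
rewrite /avoids; split=> [/and3P[D /negP N1 /negP N2] | [_ D N1 N2]].
  by split; [exact: perm_word_iota | exact: D | rewrite -contains1342 | rewrite -contains1423].
by apply/and3P; split; [exact: D | apply/negP; rewrite contains1342 |
                         apply/negP; rewrite contains1423].
Qed.

(* The two shapes of a Dumont avoider of length 2n+2 with parts a (shifted up
   by |b|) and b: 2n+1 is followed by 2n+2, or 2n+1 is the last letter. *)
Definition join_adj (a b : seq nat) :=
  map (addn (size b)) a ++ [:: (size a + size b).+1, (size a + size b).+2 & b].

Definition join_end (a b : seq nat) :=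
  map (addn (size b)) a ++ (size a + size b).+2 :: rcons b (size a + size b).+1.

Lemma size_join_end (a b : seq nat) : size (join_end a b) = (size a + size b).+2.
Proof. by rewrite size_cat /= size_rcons size_map !addnS. Qed.

Lemma size_join_adj (a b : seq nat) : size (join_adj a b) = (size a + size b).+2.
Proof. by rewrite size_cat /= size_map !addnS. Qed.

Lemma perm_join_adj (a b : seq nat) :
  perm_eq a (iota 1 (size a)) -> perm_eq b (iota 1 (size b)) ->
  perm_eq (join_adj a b) (iota 1 (size a + size b).+2).
Proof.
move=> Pa Pb; rewrite /join_adj -[[:: _, _ & b]]/([:: _; _] ++ b) catA perm_catC.
rewrite -addn2 (addnC (size a)) !iotaD -catA (addnC 1) iotaDl /= add1n addn2.
by apply: perm_cat Pb (perm_cat (perm_map _ Pa) _).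
Qed.

Lemma perm_join_end_adj (a b : seq nat) : perm_eq (join_end a b) (join_adj a b).
Proof. by rewrite perm_cat2l -cats1 -cat_cons perm_catC. Qed.

Lemma join_bounds (a b : seq nat) :
  perm_eq a (iota 1 (size a)) -> perm_eq b (iota 1 (size b)) ->
  allrel gtn (map (addn (size b)) a) b /\
  all (gtn (size a + size b).+1) (map (addn (size b)) a ++ b).
Proof.
move=> Pa Pb; split.
  apply/allrelP => _ y /mapP[x xa ->] yb.
  by have := mem_perm_iota Pa xa; have := mem_perm_iota Pb yb; rewrite /=; lia.
apply/allP => x; rewrite mem_cat => /orP[/mapP[y ya ->] | /(mem_perm_iota Pb)] /=.
  by have := mem_perm_iota Pa ya; lia.
lia.
Qed.

Lemma avoids_join_adj P (a b : seq nat) : peak_pattern P -> shift_invariant P ->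
  perm_eq a (iota 1 (size a)) -> perm_eq b (iota 1 (size b)) ->
  ~ occurs P a -> ~ occurs P b -> ~ occurs P (join_adj a b).
Proof.
move=> peakP shiftP Pa Pb Na Nb; have [skew bound] := join_bounds Pa Pb.
by case/(occurs_adj peakP skew bound) => [/occurs_shift-/(_ shiftP) | ].
Qed.

Lemma avoids_join_end P (a b : seq nat) : peak_pattern P -> shift_invariant P ->
  perm_eq a (iota 1 (size a)) -> perm_eq b (iota 1 (size b)) ->
  ~ occurs P a -> ~ occurs P b -> ~ occurs P (join_end a b).
Proof.
move=> peakP shiftP Pa Pb Na Nb; have [skew bound] := join_bounds Pa Pb.
by case/(occurs_skew_peak_end peakP skew bound (ltnSn _)) => [/occurs_shift-/(_ shiftP) | ].
Qed.

Lemma dumont_avoiding_join j m (a b : seq nat) :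
  dumont_avoiding j a -> dumont_avoiding m b ->
  dumont_avoiding (j + m).+1 (join_end a b) /\
  (0 < m -> dumont_avoiding (j + m).+1 (join_adj a b)).
Proof.
move=> Ga Gb; have [_ Da Na1 Na2] := Ga; have [_ Db Nb1 Nb2] := Gb.
have Pa := dumont_avoiding_perm Ga; have Pb := dumont_avoiding_perm Gb.
have sa := dumont_avoiding_size Ga; have sb := dumont_avoiding_size Gb.
have [_ bound] := join_bounds Pa Pb.
have odd_c : odd (size a + size b).+1 by rewrite /= sa sb -doubleD odd_double.
have NE : (j + m).+1.*2 = (size a + size b).+2 by rewrite sa sb -doubleD.
have even_sb : ~~ odd (size b) by rewrite sb odd_double.
have Pjoin := perm_join_adj Pa Pb; rewrite -NE in Pjoin.
move: bound; rewrite all_cat => /andP[bound_a bound_b].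
split=> [|m_gt0]; split.
- by rewrite (perm_trans (perm_join_end_adj a b)).
- by rewrite /join_end dumont1_word_end ?all_cat ?bound_a // dumont1_word_shift ?Da.
- exact: avoids_join_end peak_pattern1342 shift_invariant1342 Pa Pb Na1 Nb1.
- exact: avoids_join_end peak_pattern1423 shift_invariant1423 Pa Pb Na2 Nb2.
- exact: Pjoin.
- rewrite /join_adj dumont1_word_adj ?dumont1_word_shift ?Da ?Db //=.
    by rewrite -size_eq0 sb double_eq0 -lt0n.
  by apply/allP => x /(allP bound_b) /= /leqW.
- exact: avoids_join_adj peak_pattern1342 shift_invariant1342 Pa Pb Na1 Nb1.
- exact: avoids_join_adj peak_pattern1423 shift_invariant1423 Pa Pb Na2 Nb2.
Qed.

Lemma dumont_top_split n (w : seq nat) :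
  perm_eq w (iota 1 n.*2.+2) -> dumont1_word w ->
  (exists u v, w = u ++ [:: n.*2.+1, n.*2.+2 & v]) \/
  (exists u v, w = u ++ n.*2.+2 :: rcons v n.*2.+1).
Proof.
move=> Pw Dw; have in_w x : (x \in w) = (0 < x <= n.*2.+2) by rewrite (perm_mem Pw) mem_iota.
have cw : n.*2.+1 \in w by rewrite in_w; lia.
case/splitPr: cw Pw Dw in_w => u [|y v] _ Dw in_w.
  have : n.*2.+2 \in u ++ [:: n.*2.+1] by rewrite in_w; lia.
  rewrite mem_cat inE gtn_eqF ?orbF // => /splitPr[u1 u2].
  by right; exists u1, u2; rewrite -catA cats1.
move: Dw; rewrite dumont1_wordE sorted_cat_cons /dumont_rel /= odd_double /=.
case/andP=> /and3P[_ lt_y _] _.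
have /andP[_ y_le] : 0 < y <= n.*2.+2 by rewrite -in_w mem_cat !inE eqxx !orbT.
by left; exists u, v; have -> : y = n.*2.+2 by apply/eqP; rewrite eqn_leq y_le.
Qed.

Lemma dumont_avoiding_skew_split n (lo hi w : seq nat) :
  perm_eq (lo ++ hi) (iota 1 n.*2) -> allrel ltn lo hi ->
  dumont1_word lo -> dumont1_word hi -> subseq lo w -> subseq hi w ->
  ~ occurs pat1342 w -> ~ occurs pat1423 w ->
  exists j m a, [/\ j + m = n, dumont_avoiding j a, dumont_avoiding m lo &
                    hi = map (addn (size lo)) a].
Proof.
move=> P skew Dlo Dhi lo_w hi_w N1 N2; have [Plo Phi] := perm_iota_skew P skew.
set k := size lo in Phi *; have size_lohi : k + size hi = n.*2.
  by rewrite -size_cat (perm_size P) size_iota.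
have even_k : ~~ odd k.
  case: (posnP (size hi)) => [hi0 | hi_gt0].
    by rewrite -(addn0 k) -hi0 size_lohi odd_double.
  apply: (dumont1_word_min_odd (x := k.+1) Dhi); first by rewrite (perm_mem Phi) mem_iota; lia.
  by apply/allP => x /(mem_perm_iota Phi); lia.
have even_hi : ~~ odd (size hi).
  by move: (odd_double n); rewrite -size_lohi oddD (negbTE even_k) /= => ->.
have hiE : hi = map (addn k) (map (subn^~ k) hi).
  by rewrite -map_comp map_id_in // => x /(mem_perm_iota Phi) /=; lia.
exists (size hi)./2, k./2, (map (subn^~ k) hi); split=> //.
- by apply: double_inj; rewrite doubleD !even_halfK // addnC.
- split.
  + rewrite even_halfK //; apply: (perm_map_inj (@addnI k)); rewrite -hiE.
    by rewrite -iotaDl (addnC k).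
  + by rewrite -(dumont1_word_shift _ even_k) -hiE.
  + by rewrite -(occurs_shift k _ shift_invariant1342) -hiE => /(occurs_subseq hi_w).
  + by rewrite -(occurs_shift k _ shift_invariant1423) -hiE => /(occurs_subseq hi_w).
- split.
  + by rewrite even_halfK.
  + exact: Dlo.
  + by move/(occurs_subseq lo_w).
  + by move/(occurs_subseq lo_w).
Qed.

Lemma join_adj_inv n (u v : seq nat) (w := u ++ [:: n.*2.+1, n.*2.+2 & v]) :
  dumont_avoiding n.+1 w ->
  exists j m a,
    [/\ j + m = n, 0 < m, dumont_avoiding j a, dumont_avoiding m v & w = join_adj a v].
Proof.
case; rewrite doubleS => Pw Dw N1 N2.
have Pvu : perm_eq (v ++ u) (iota 1 n.*2).
  apply: perm_iota_top2_parts Pw _; apply/seq.permP => p; rewrite /w !count_cat /=; lia.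
have lt_c x : x \in v ++ u -> x < n.*2.+1 by move/(mem_perm_iota Pvu); lia.
have skew : allrel ltn v u.
  apply: perm_iota_allrel_ltn Pvu _ => x y xu yv xy.
  apply: N1; exists x, n.*2.+1, n.*2.+2, y; split.
    by rewrite /pat1342 xy lt_c ?ltnSn // mem_cat yv.
  by rewrite /w -cat1s cat_subseq ?sub1seq //= !eqxx sub1seq.
move: Dw; rewrite /w dumont1_word_adj /= ?odd_double //; last 2 first.
- by apply/allP => x xu; apply: lt_c; rewrite mem_cat xu orbT.
- by apply/allP => x xv; apply/ltnW/lt_c; rewrite mem_cat xv.
case/and3P=> Du Dv v_nil.
have v_w : subseq v w by rewrite /w -[[:: _, _ & v]]/([:: _; _] ++ v) catA suffix_subseq.
have [j [m [a [jm Ga Gv uE]]]] :=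
  dumont_avoiding_skew_split Pvu skew Dv Du v_w (prefix_subseq _ _) N1 N2.
exists j, m, a; split=> //.
  by rewrite -double_gt0 -(dumont_avoiding_size Gv) lt0n size_eq0.
by rewrite /w /join_adj -uE (dumont_avoiding_size Ga) (dumont_avoiding_size Gv) -doubleD jm.
Qed.

Lemma join_end_inv n (u v : seq nat) (w := u ++ n.*2.+2 :: rcons v n.*2.+1) :
  dumont_avoiding n.+1 w ->
  exists j m a, [/\ j + m = n, dumont_avoiding j a, dumont_avoiding m v & w = join_end a v].
Proof.
case; rewrite doubleS => Pw Dw N1 N2.
have Pvu : perm_eq (v ++ u) (iota 1 n.*2).
  apply: perm_iota_top2_parts Pw _; apply/seq.permP => p.
  by rewrite /w -cats1 -cat_cons !count_cat /=; lia.
have lt_c x : x \in v ++ u -> x < n.*2.+1 by move/(mem_perm_iota Pvu); lia.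
have skew : allrel ltn v u.
  apply: perm_iota_allrel_ltn Pvu _ => x y xu yv xy.
  apply: N2; exists x, n.*2.+2, y, n.*2.+1; split.
    by rewrite /pat1423 xy (lt_c y) ?ltnSn // mem_cat yv.
  rewrite /w -cat1s cat_subseq ?sub1seq //= eqxx.
  by rewrite -[[:: y; _]]/(rcons [:: y] _) subseq_rcons2 eqxx sub1seq.
move: Dw; rewrite /w dumont1_word_end /= ?odd_double //; last first.
  by apply/allP => x; rewrite mem_cat orbC -mem_cat; exact: lt_c.
case/andP=> Du Dv.
have v_w : subseq v w.
  exact: subseq_trans (subseq_rcons v _) (subseq_trans (subseq_cons _ _) (suffix_subseq u _)).
have [j [m [a [jm Ga Gv uE]]]] :=
  dumont_avoiding_skew_split Pvu skew Dv Du v_w (prefix_subseq _ _) N1 N2.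
exists j, m, a; split=> //.
by rewrite /w /join_end -uE (dumont_avoiding_size Ga) (dumont_avoiding_size Gv) -doubleD jm.
Qed.

Lemma dumont_avoiding_inv n (w : seq nat) : dumont_avoiding n.+1 w ->
  exists j m a b, [/\ j + m = n, dumont_avoiding j a, dumont_avoiding m b &
                      w = join_end a b \/ 0 < m /\ w = join_adj a b].
Proof.
move=> Gw; have [Pw Dw _ _] := Gw; rewrite doubleS in Pw.
case: (dumont_top_split Pw Dw) => -[u [v wE]]; subst w.
  have [j [m [a [jm m_gt0 Ga Gv ->]]]] := join_adj_inv Gw.
  by exists j, m, a, v; split=> //; right.
have [j [m [a [jm Ga Gv ->]]]] := join_end_inv Gw.
by exists j, m, a, v; split=> //; left.
Qed.

Lemma index_join_end (a b : seq nat) : perm_eq a (iota 1 (size a)) ->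
  index (size (join_end a b)) (join_end a b) = size a.
Proof.
move=> Pa; rewrite size_join_end /join_end index_cat ifN ?size_map /= ?eqxx ?addn0 //.
by apply/mapP => -[x /(mem_perm_iota Pa) x_le]; lia.
Qed.

Lemma index_join_adj (a b : seq nat) : perm_eq a (iota 1 (size a)) ->
  index (size (join_adj a b)) (join_adj a b) = (size a).+1.
Proof.
move=> Pa; rewrite size_join_adj /join_adj index_cat ifN ?size_map /= ?eqxx.
  by rewrite eq_sym eqn_leq ltnn addn1.
by apply/mapP => -[x /(mem_perm_iota Pa) x_le]; lia.
Qed.

Lemma join_end_inj (a b a' b' : seq nat) : size a = size a' -> size b = size b' ->
  join_end a b = join_end a' b' -> a = a' /\ b = b'.
Proof.
rewrite /join_end => sa sb; rewrite sa sb => /eqP; rewrite eqseq_cat ?size_map //.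
by case/andP=> /eqP/(inj_map (@addnI _)) -> /eqP[] /rcons_inj[->].
Qed.

Lemma join_adj_inj (a b a' b' : seq nat) : size a = size a' -> size b = size b' ->
  join_adj a b = join_adj a' b' -> a = a' /\ b = b'.
Proof.
rewrite /join_adj => sa sb; rewrite sa sb => /eqP; rewrite eqseq_cat ?size_map //.
by case/andP=> /eqP/(inj_map (@addnI _)) -> /eqP[->].
Qed.

Definition joins (A B : seq (seq nat)) (adj : bool) : seq (seq nat) :=
  [seq join_end a b | a <- A, b <- B] ++
  (if adj then [seq join_adj a b | a <- A, b <- B] else [::]).

Lemma mem_joins (A B : seq (seq nat)) adj (w : seq nat) :
  w \in joins A B adj <->
  exists a b, [/\ a \in A, b \in B & w = join_end a b \/ adj /\ w = join_adj a b].
Proof.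
rewrite mem_cat; split=> [/orP[] | [a [b [aA bB [-> | [adjT ->]]]]]].
- by case/allpairsP=> -[a b] /= [aA bB ->]; exists a, b; split=> //; left.
- by case: adj => // /allpairsP[[a b] /= [aA bB ->]]; exists a, b; split=> //; right.
- by apply/orP; left; apply: allpairs_f.
- by rewrite adjT; apply/orP; right; apply: allpairs_f.
Qed.

Lemma size_joins (A B : seq (seq nat)) adj :
  size (joins A B adj) = size A * size B + adj * (size A * size B).
Proof. by rewrite size_cat size_allpairs; case: adj; rewrite /= ?size_allpairs ?mul1n ?mul0n. Qed.

(* The maximal letter of a glued word sits at position 2j or 2j+1. *)
Lemma joins_key j (A B : seq (seq nat)) adj (w : seq nat) :
  {in A, forall a, dumont_avoiding j a} -> w \in joins A B adj -> (index (size w) w)./2 = j.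
Proof.
move=> GA /mem_joins[a [b [aA _ [-> | [_ ->]]]]]; have Ga := GA a aA.
  by rewrite index_join_end ?(dumont_avoiding_perm Ga) // (dumont_avoiding_size Ga) doubleK.
rewrite index_join_adj ?(dumont_avoiding_perm Ga) // (dumont_avoiding_size Ga).
by rewrite -uphalfE uphalf_double.
Qed.

Lemma uniq_joins j m (A B : seq (seq nat)) adj : uniq A -> uniq B ->
  {in A, forall a, dumont_avoiding j a} -> {in B, forall b, dumont_avoiding m b} ->
  uniq (joins A B adj).
Proof.
move=> uniqA uniqB GA GB.
have sizeA a : a \in A -> size a = j.*2 by move/GA/dumont_avoiding_size.
have sizeB b : b \in B -> size b = m.*2 by move/GB/dumont_avoiding_size.
have join_inj f : (forall a b a' b', size a = size a' -> size b = size b' ->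
    f a b = f a' b' -> a = a' /\ b = b') -> uniq [seq f a b | a <- A, b <- B].
  move=> f_inj; apply: allpairs_uniq uniqA uniqB _ => -[a b] [a' b'].
  move=> /allpairsP[[x y] /= [xA yB [-> ->]]] /allpairsP[[x' y'] /= [x'A y'B [-> ->]]] E.
  by have [||-> ->] // := f_inj _ _ _ _ _ _ E; [rewrite !sizeA | rewrite !sizeB].
rewrite cat_uniq join_inj; last exact: join_end_inj.
case: adj; rewrite ?andbT // join_inj ?andbT; last exact: join_adj_inj.
apply/hasPn => _ /allpairsP[[a b] /= [aA bB ->]].
apply/negP => /allpairsP[[a' b'] /= [a'A b'B E]].
have := index_join_adj b (dumont_avoiding_perm (GA a aA)).
rewrite E index_join_end ?(dumont_avoiding_perm (GA a' a'A)) // sizeA ?sizeA //.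
by move/eqP; rewrite eqn_leq ltnn andbF.
Qed.

Definition level_succ (G : seq (seq (seq nat))) : seq (seq nat) :=
  let n := (size G).-1 in
  flatten [seq joins (nth [::] G j) (nth [::] G (n - j)) (j < n) | j <- iota 0 n.+1].

(* levels n = [:: dumont_avoiders 0; ...; dumont_avoiders n]: it carries the
   course-of-values recursion. *)
Fixpoint levels n : seq (seq (seq nat)) :=
  if n is n'.+1 then rcons (levels n') (level_succ (levels n')) else [:: [:: [::]]].

Definition dumont_avoiders n := nth [::] (levels n) n.

Lemma size_levels n : size (levels n) = n.+1.
Proof. by elim: n => //= n IHn; rewrite size_rcons IHn. Qed.

Lemma nth_levels n i : i <= n -> nth [::] (levels n) i = dumont_avoiders i.
Proof.
elim: n => [|n IHn]; first by rewrite leqn0 => /eqP ->.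
rewrite leq_eqVlt => /predU1P[-> // | lt_in].
by rewrite /= nth_rcons size_levels lt_in IHn.
Qed.

Lemma dumont_avoidersS n :
  dumont_avoiders n.+1 =
  flatten [seq joins (dumont_avoiders j) (dumont_avoiders (n - j)) (j < n) | j <- iota 0 n.+1].
Proof.
have -> : dumont_avoiders n.+1 = level_succ (levels n).
  by rewrite /dumont_avoiders /= nth_rcons size_levels ltnn eqxx.
rewrite /level_succ size_levels -pred_Sn; congr flatten; apply/eq_in_map => j.
by rewrite mem_iota ltnS => /andP[_ le_jn]; rewrite !nth_levels ?leq_subr.
Qed.

Lemma mem_dumont_avoidersS n (w : seq nat) :
  w \in dumont_avoiders n.+1 <->
  exists j m a b, [/\ j + m = n, a \in dumont_avoiders j, b \in dumont_avoiders m &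
                      w = join_end a b \/ 0 < m /\ w = join_adj a b].
Proof.
rewrite dumont_avoidersS; split.
  case/flattenP=> s /mapP[j]; rewrite mem_iota ltnS => /andP[_ le_jn] -> {s}.
  case/mem_joins=> a [b [aA bB w_eq]].
  by exists j, (n - j), a, b; rewrite subnKC // subn_gt0.
case=> j [m [a [b [jm aA bB w_eq]]]]; apply/flattenP.
exists (joins (dumont_avoiders j) (dumont_avoiders m) (j < n)).
  by apply/mapP; exists j; rewrite ?mem_iota -jm ?addKn // ltnS leq_addr.
have -> : (j < n) = (0 < m) by rewrite -jm -{1}(addn0 j) ltn_add2l.
by apply/mem_joins; exists a, b.
Qed.

Lemma mem_dumont_avoiders n (w : seq nat) : w \in dumont_avoiders n <-> dumont_avoiding n w.
Proof.
elim/ltn_ind: n w => -[|n] IH w.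
  rewrite /dumont_avoiders /= inE; split=> [/eqP -> | /dumont_avoiding_size /size0nil -> //].
  by split; rewrite ?dumont1_wordE //; apply: occurs_nil.
rewrite mem_dumont_avoidersS.
split=> [[j [m [a [b [jm a_in b_in w_eq]]]]] | /dumont_avoiding_inv].
  have lt_j : j < n.+1 by rewrite ltnS -jm leq_addr.
  have lt_m : m < n.+1 by rewrite ltnS -jm leq_addl.
  have [Gend Gadj] := dumont_avoiding_join ((IH j lt_j a).1 a_in) ((IH m lt_m b).1 b_in).
  by rewrite -jm; case: w_eq => [-> | [m_gt0 ->]]; last exact: Gadj.
case=> j [m [a [b [jm Ga Gb w_eq]]]].
have lt_j : j < n.+1 by rewrite ltnS -jm leq_addr.
have lt_m : m < n.+1 by rewrite ltnS -jm leq_addl.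
by exists j, m, a, b; split=> //; [apply/(IH j lt_j) | apply/(IH m lt_m)].
Qed.

Lemma uniq_dumont_avoiders n : uniq (dumont_avoiders n).
Proof.
elim/ltn_ind: n => -[|n] IH //; rewrite dumont_avoidersS.
apply: (uniq_flatten_key (key := fun w => (index (size w) w)./2)); first exact: iota_uniq.
- move=> j; rewrite mem_iota ltnS => /andP[_ le_jn].
  apply: (uniq_joins (j := j) (m := n - j)); rewrite ?IH ?ltnS ?leq_subr //;
    by move=> a /mem_dumont_avoiders.
- by move=> j _ w; apply: joins_key => a /mem_dumont_avoiders.
Qed.

Lemma size_dumont_avoidersS n :
  size (dumont_avoiders n.+1) + size (dumont_avoiders n) =
  2 * \sum_(0 <= j < n.+1) size (dumont_avoiders j) * size (dumont_avoiders (n - j)).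
Proof.
rewrite dumont_avoidersS size_flatten sumnE /shape -map_comp big_map.
rewrite -[iota 0 n.+1]/(index_iota 0 n.+1).
under eq_bigr => j _ do rewrite /= size_joins.
rewrite big_split !big_nat_recr //= ltnn subnn muln1 addn0.
under [X in _ + X + _]eq_big_nat => j /andP[_ ->] do rewrite mul1n.
lia.
Qed.

Lemma size_schr_list m : size (schr_list m) = m.+1.
Proof. by elim: m => //= m IHm; rewrite size_rcons IHm. Qed.

Lemma nth_schr_list m i : i <= m -> nth 0%R (schr_list m) i = little_schroder i.
Proof.
elim: m => [|m IHm]; first by rewrite leqn0 => /eqP ->.
rewrite leq_eqVlt => /predU1P[-> // | lt_im].
by rewrite /= nth_rcons size_schr_list lt_im IHm.
Qed.

Section LittleSchroder.
Import GRing.Theory.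

Lemma little_schroderS m : little_schroder m.+1 =
  (2 * \sum_(1 <= i < m.+1) little_schroder i * little_schroder (m.+1 - i)
   - little_schroder m + (m == 0%N)%:R)%R.
Proof.
rewrite {1}/little_schroder /= nth_rcons size_schr_list ltnn eqxx /schr_next size_schr_list.
rewrite -pred_Sn nth_schr_list //.
have sumE : (\sum_(1 <= i < m.+1) (schr_list m)`_i * (schr_list m)`_(m.+1 - i) =
             \sum_(1 <= i < m.+1) little_schroder i * little_schroder (m.+1 - i))%R.
  by apply: eq_big_nat => i /andP[i_gt0 lt_i]; rewrite !nth_schr_list //; lia.
by rewrite sumE eqSS.
Qed.

Lemma size_dumont_avoiders n : ((size (dumont_avoiders n))%:Z = little_schroder n.+1)%R.
Proof.
elim/ltn_ind: n => -[|n] IH; first by rewrite little_schroderS big_geq.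
rewrite little_schroderS big_add1 /= addr0.
under eq_big_nat => i /andP[_ le_in].
  rewrite subSS subSn // -!IH ?ltnS ?leq_subr // -PoszM.
  over.
rewrite -(big_morph Posz PoszD (erefl (Posz 0))) -IH //.
have := size_dumont_avoidersS n; lia.
Qed.

End LittleSchroder.

Theorem theorem3p4 (n : nat) :
  (#|[set s : 'S_(n.*2) | [&& dumont1 s,
                               avoids (word s) [:: 1; 3; 4; 2]%N
                             & avoids (word s) [:: 1; 4; 2; 3]%N]]|%:Z
   = little_schroder n.+1)%R.
Proof.
rewrite -size_dumont_avoiders; congr Posz.
rewrite cardE -(size_map (@word _)); apply: perm_size; apply: uniq_perm.
- by rewrite map_inj_uniq ?enum_uniq //; exact: word_inj.
- exact: uniq_dumont_avoiders.
move=> w; apply/mapP/idP => [[s] | /mem_dumont_avoiders G].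
  by rewrite mem_enum inE => /dumont_avoiding_word G ->; apply/mem_dumont_avoiders.
have [Pw _ _ _] := G; have [s sE] := word_surj Pw.
by exists s; rewrite // mem_enum inE dumont_avoiding_word sE.
Qed.
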